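(* Let $\mathcal{M}=(S,P,E,s_{init},L)$ be a CTMC with absorbing goal state $g$ and reward function $\rho\colon S\to\mathbb{R}_{>0}$ (all rewards positive). Let $\varepsilon,\delta\geq0$, let $s,s'\in S$ with $s\sim_{\varepsilon,\delta}s'$, let $r\geq0$, and let $\widehat{q}\geq\max_{p\in S}\widehat{E}(p)$ where $\widehat{E}(p)=E(p)/\rho(p)$. Then $$\left|\mathrm{Pr}_s(\lozenge_{\leq r}g)-\mathrm{Pr}_{s'}(\lozenge_{\leq r}g)\right|\leq 1-e^{-\widehat{q}\, r\,(e^{\delta}(\varepsilon+1)-1)}.$$
   Context: A CTMC $(S,P,E,s_{init},L)$: finite $S$, $P\colon S\to\mathrm{Distr}(S)$ ($P(s,A)=\sum_{a\in A}P(s,a)$), $E\colon S\to\mathbb{R}_{>0}$, initial state, labeling $L$. A timed path is $\sigma=s_0t_0s_1t_1\dots$ with $t_i>0$ the residence time in $s_i$ (exponential with rate $E(s_i)$, next state $s_{i+1}$ drawn with probability $P(s_i,s_{i+1})$). $\sigma@t=s_m$ for $m$ the smallest index with $t\leq\sum_{i=0}^{m}t_i$. The cumulative reward until time $t$ is $\rho(\sigma,t)=\sum_{j=0}^{m-1}t_j\rho(s_j)+(t-\sum_{j=0}^{m-1}t_j)\rho(s_m)$ where $\sigma@t=s_m$. $\mathrm{Pr}_s(\lozenge_{\leq r}g)$ is the probability that the CTMC started in $s$ reaches $g$ while having accumulated reward at most $r$. For $R\subseteq S\times S$, $R(A)=\{t\mid\exists a\in A:(a,t)\in R\}$. In the presence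 of rewards, a reflexive symmetric $R\subseteq S\times S$ is an $(\varepsilon,\delta)$-bisimulation if for all $(s,s')\in R$: $L(s)=L(s')$, $\rho(s)=\rho(s')$, $|\ln E(s)-\ln E(s')|\leq\delta$, and $P(s,A)\leq P(s',R(A))+\varepsilon$ for all $A\subseteq S$; $s\sim_{\varepsilon,\delta}s'$ if some such relation contains $(s,s')$. Standing assumption: $g$ is the unique goal state, absorbing and uniquely labeled. *)

From HB Require Import structures.
From mathcomp Require Import all_boot all_order all_algebra.
From mathcomp Require Import all_classical all_reals all_analysis.
Set Implicit Arguments. Unset Strict Implicit. Unset Printing Implicit Defensive.
Import Order.TTheory GRing.Theory Num.Theory.
Local Open Scope classical_set_scope.
Local Open Scope ring_scope.

Section CTMC.
Variables (R : realType) (S : finType).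

Definition Pset (P : S -> S -> R) (s : S) (A : {set S}) : R :=
  \sum_(a in A) P s a.

Definition is_distr_fun (P : S -> S -> R) : Prop :=
  (forall s t, 0 <= P s t) /\ (forall s, \sum_(t : S) P s t = 1).

Definition rel_image (Rl : rel S) (A : {set S}) : {set S} :=
  [set t | [exists a in A, Rl a t]].

Definition eps_delta_bisim {A : eqType} (P : S -> S -> R) (E : S -> R)
    (L : S -> A) (rho : S -> R) (eps delta : R) (Rl : rel S) : Prop :=
  (forall s, Rl s s) /\ (forall s s', Rl s s' -> Rl s' s) /\
  (forall s s', Rl s s' ->
     [/\ L s = L s', rho s = rho s',
         `| ln (E s) - ln (E s') | <= delta &
         forall B : {set S}, Pset P s B <= Pset P s' (rel_image Rl B) + eps]).

Definition eps_delta_bisimilar {A : eqType} (P : S -> S -> R) (E : S -> R)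
    (L : S -> A) (rho : S -> R) (eps delta : R) (s s' : S) : Prop :=
  exists Rl : rel S, eps_delta_bisim P E L rho eps delta Rl /\ Rl s s'.

(** Probability (from state s) of the event "the timed path reaches g within
    its first n jumps, having accumulated reward at most r upon entering g",
    i.e. exists j <= n, s_j = g and sum_{i<j} rho(s_i) t_i <= r.
    Computed over the finite-dimensional distribution of the first n
    (state, residence time) pairs: residence time in s ~ Exp(E s),
    successor drawn from P s. *)
Fixpoint reach_within (P : S -> S -> R) (E : S -> R) (rho : S -> R) (g : S)
    (n : nat) (s : S) (r : R) : \bar R :=
  match n with
  | 0 => (((s == g) && (0 <= r))%:R)%:E
  | n'.+1 =>
      if (s == g) && (0 <= r) then 1%E else
      (\int[@lebesgue_measure R]_(t in [set x : R | (0 < x)%R])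
         ((E s * expR (- (E s * t)))%:E *
          \sum_(s' : S) ((P s s')%:E * reach_within P E rho g n' s' (r - rho s * t))))%E
  end.

(** Pr_s(<>_{<= r} g): probability of the increasing union over n of the
    events above, i.e. the supremum of their probabilities. *)
Definition Pr_reach (P : S -> S -> R) (E : S -> R) (rho : S -> R) (g : S)
    (s : S) (r : R) : R :=
  fine (ereal_sup (range (fun n => reach_within P E rho g n s r))).

End CTMC.

From HB Require Import structures.
From mathcomp Require Import all_boot all_order all_algebra.
From mathcomp Require Import all_classical all_reals all_analysis.
From mathcomp Require Import measurable_realfun.
From mathcomp Require Import ring lra.
Import Order.TTheory GRing.Theory Num.Theory.
Set Implicit Arguments. Unset Strict Implicit. Unset Printing Implicit Defensive.
Local Open Scope ring_scope.

(* Let v_n(u, x) be the probability of reaching g from u within n jumps on a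
   reward budget x, and K = qhat (e^delta (eps + 1) - 1).  By induction on n,
   every v_n(u, .) is a sub-distribution function of the budget and
   v_n(s, x) - v_n(s', x) <= 1 - e^(-K x) for related s, s'.  In the inductive
   step the bisimulation condition P(s, B) <= P(s', R(B)) + eps couples the two
   successor distributions up to eps, turning the bound c on v_n into the bound
   c + eps (1 - c) on the expected successor values.  The residence times, of
   rates a and b with |ln a - ln b| <= delta, are then compared through their
   common sub-density min(a, b) e^(-max(a, b) t), and the value of K is exactly
   what makes the resulting integral inequality close.  Taking suprema over n
   gives the theorem. *)

Section Coupling.
Variables (R : realType) (S : finType) (P : S -> S -> R) (Rl : rel S).
Variables (eps : R) (s s' : S).
Hypotheses (P_ge0 : forall a b, 0 <= P a b) (eps_ge0 : 0 <= eps).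
Hypothesis Pset_le : forall B : {set S}, Pset P s B <= Pset P s' (rel_image Rl B) + eps.

Lemma sum_mul_indicator (u : S) (B : {set S}) (c : R) :
  \sum_v P u v * (c * (v \in B)%:R) = c * Pset P u B.
Proof.
rewrite /Pset mulr_sumr [RHS]big_mkcond /=; apply: eq_bigr => v _.
by case: (v \in B); rewrite ?mulr1 ?mulr0 // mulrC.
Qed.

Lemma coupling_le (F G : S -> R) (m : R) : 0 <= m ->
  (forall v, 0 <= F v <= m) -> (forall u, 0 <= G u) ->
  (forall v u, Rl v u -> F v <= G u) ->
  \sum_v P s v * F v <= \sum_u P s' u * G u + eps * m.
Proof.
have [n] := ubnP #|[set v | 0 < F v]|; elim: n F G m => // n IH F G m.
set B := [set v | 0 < F v] => ltBn m_ge0 F_bd G_ge0 FG.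
have F_ge0 v : 0 <= F v by case/andP: (F_bd v).
have F0 v : v \notin B -> F v = 0.
  by rewrite inE -leNgt => Fv_le0; apply/le_anti; rewrite Fv_le0 F_ge0.
have [B0|[v0 v0B]] := set_0Vmem B.
  rewrite big1 ?add0r => [|v _]; last by rewrite F0 ?mulr0 // B0 inE.
  by rewrite addr_ge0 ?mulr_ge0 // sumr_ge0 // => u _; rewrite mulr_ge0.
(* Peel off the lowest positive level [mu] of [F]: [F = F' + mu * 1_B], and
   [G >= G' + mu * 1_(R(B))] because [G >= mu] on [R(B)]. *)
pose v1 := [arg min_(i < v0 | i \in B) F i]%O.
have [v1B v1_min] : v1 \in B /\ forall v, v \in B -> F v1 <= F v.
  by rewrite /v1; case: arg_minP.
set mu := F v1; have mu_gt0 : 0 < mu by move: v1B; rewrite inE.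
pose F' v := Num.max (F v - mu) 0; pose G' u := Num.max (G u - mu) 0.
have FE v : F v = F' v + mu * (v \in B)%:R.
  rewrite /F'; have [vB|vB] := boolP (v \in B).
    by rewrite mulr1 max_l ?subrK // subr_ge0 v1_min.
  by rewrite F0 // mulr0 addr0 sub0r max_r // oppr_le0 ltW.
have GE u : G' u + mu * (u \in rel_image Rl B)%:R <= G u.
  rewrite /G' inE; case: existsP => [[a /andP[aB Rau]]|_].
    by rewrite mulr1 max_l ?subrK // subr_ge0 (le_trans (v1_min _ aB)) ?FG.
  by rewrite mulr0 addr0 ge_max G_ge0 lerBlDr lerDl ltW.
have IH' : \sum_v P s v * F' v <= \sum_u P s' u * G' u + eps * (m - mu).
  apply: IH.
  - rewrite -ltnS; apply: leq_ltn_trans ltBn; rewrite (cardsD1 v1 B) v1B add1n ltnS.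
    apply: subset_leq_card; apply/fintype.subsetP => v; rewrite !inE => F'v.
    have Fv : mu < F v by move: F'v; rewrite lt_max ltxx orbF subr_gt0.
    by rewrite (lt_trans mu_gt0 Fv) andbT; apply: contraTneq Fv => ->; rewrite ltxx.
  - by rewrite subr_ge0; case/andP: (F_bd v1).
  - move=> v; have [_ Fv_le] := andP (F_bd v); have [_ mu_le] := andP (F_bd v1).
    by rewrite /F' le_max lexx orbT ge_max lerD2r Fv_le subr_ge0 mu_le.
  - by move=> u; rewrite /G' le_max lexx orbT.
  - by move=> v u Rvu; rewrite /F' /G' ge_max !le_max lexx orbT andbT lerD2r FG.
have PFE : \sum_v P s v * F v = \sum_v P s v * F' v + mu * Pset P s B.
  by rewrite -sum_mul_indicator -big_split; apply: eq_bigr => v _; rewrite {1}FE mulrDr.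
have PGE : \sum_u P s' u * G' u + mu * Pset P s' (rel_image Rl B) <= \sum_u P s' u * G u.
  rewrite -sum_mul_indicator -big_split; apply: ler_sum => u _ /=.
  by rewrite -mulrDr ler_wpM2l.
have := Pset_le B; have := ltW mu_gt0; nra.
Qed.

Lemma coupling_sub_le (f : S -> R) (c : R) : \sum_v P s v = 1 ->
  (forall v, 0 <= f v <= 1) -> c <= 1 -> (forall v u, Rl v u -> f v - f u <= c) ->
  \sum_v P s v * f v <= \sum_u P s' u * f u + c + eps * (1 - c).
Proof.
move=> Ps1 f01 c1 fRl.
have f0 u : 0 <= f u by case/andP: (f01 u).
have lift : \sum_v P s v * f v <= \sum_v P s v * Num.max (f v - c) 0 + c.
  rewrite -[X in _ + X]mul1r -Ps1 mulr_suml -big_split /=; apply: ler_sum => v _.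
  by rewrite -mulrDr ler_wpM2l // -lerBlDr le_max lexx.
have : \sum_v P s v * Num.max (f v - c) 0 <= \sum_u P s' u * f u + eps * (1 - c).
  apply: coupling_le => //; first by rewrite subr_ge0.
    move=> v; have [_ fv1] := andP (f01 v).
    by rewrite le_max lexx orbT ge_max lerD2r fv1 subr_ge0 c1.
  by move=> v u /fRl; rewrite ge_max f0 andbT; lra.
by move: lift; lra.
Qed.

End Coupling.

Section ExpStep.
Variable R : realType.
Local Notation mu := (@lebesgue_measure R).
Local Open Scope classical_set_scope.
Local Notation pos := [set x : R | (0 < x)%R].

Definition subcdf (H : R -> R) :=
  [/\ {homo H : x y / x <= y}, forall y, 0 <= H y <= 1 & forall y, y < 0 -> H y = 0].

(* [exp_step a rh H r] is E[H (r - rh T)] for T ~ Exp(a): the expectation of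
   [H] after one residence of rate [a] in a state earning reward [rh] per time
   unit, starting with budget [r]. *)
Definition exp_step (a rh : R) (H : R -> R) (r : R) : \bar R :=
  (\int[mu]_(t in pos) (a * expR (- (a * t)) * H (r - rh * t))%:E)%E.

Lemma measurable_pos : measurable pos.
Proof.
have -> : pos = `]0, +oo[%classic.
  by apply/seteqP; split => x; rewrite /= in_itv /= andbT.
exact: measurable_itv.
Qed.

Lemma measurable_exp_density (a : R) : 0 <= a ->
  measurable_fun pos (fun t => a * expR (- (a * t))).
Proof.
move=> a0; apply: nonincreasing_measurable measurable_pos _ => x y xy.
by rewrite ler_wpM2l // ler_expR lerN2 ler_wpM2l.
Qed.

Lemma measurable_comp_budget (H : R -> R) (r rh : R) : {homo H : x y / x <= y} ->
  0 <= rh -> measurable_fun pos (fun t => H (r - rh * t)).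
Proof.
move=> Hh rh0; apply: nonincreasing_measurable measurable_pos _ => x y xy.
by apply: Hh; rewrite lerD2l lerN2 ler_wpM2l.
Qed.

Lemma measurable_le_indicator (T : R) :
  measurable_fun pos (fun t : R => ((t <= T)%R)%:R : R).
Proof.
apply: nonincreasing_measurable measurable_pos _ => x y xy.
by case: (leP y T) => yT; rewrite ?(le_trans xy yT) ?ler0n.
Qed.

Lemma integral_exp_density_upto (c al T : R) : 0 <= c -> 0 < al -> 0 <= T ->
  (\int[mu]_(t in pos) (c * (al * expR (- (al * t))) * ((t <= T)%R)%:R)%:E
   = (c * (1 - expR (- (al * T))))%:E)%E.
Proof.
move=> c0 al0; rewrite le_eqVlt => /orP[/eqP<-|T0].
  rewrite mulr0 oppr0 expR0 subrr mulr0 (eq_integral (cst 0%E)) ?integral0 //.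
  by move=> t; rewrite inE /= => t0; rewrite lt_geF // mulr0.
have mpdf : measurable_fun setT (fun t => (c * exponential_pdf al t)%:E).
  apply/measurable_EFinP; apply: measurable_funM; first exact: measurable_cst.
  exact: measurable_exponential_pdf.
transitivity (\int[mu]_(t in pos)
    (((fun t => (c * exponential_pdf al t)%:E) \_ [set t : R | (t <= T)%R]) t))%E.
  apply: eq_integral => t; rewrite inE /= => t0; rewrite patchE.
  have [tT|tT] := leP t T.
    by rewrite mem_set //= mulr1 exponential_pdfE ?ltW // mulNr.
  by rewrite memNset /= ?mulr0 //; apply/negP; rewrite -ltNge.
rewrite -integral_mkcondr.
have -> : pos `&` [set t : R | (t <= T)%R] = `]0, T]%classic.
  by apply/seteqP; split => x /=; rewrite in_itv /=; [case=> -> ->|case/andP=> -> ->].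
rewrite integral_itv_obnd_cbnd; last exact: measurable_funS mpdf.
under eq_integral do rewrite EFinM.
rewrite ge0_integralZl_EFin //; last 2 first.
- by move=> x _; rewrite lee_fin exponential_pdf_ge0 // ltW.
- by apply/measurable_EFinP; apply: measurable_funTS; exact: measurable_exponential_pdf.
have := exponential_prob_itv0c al T0; rewrite /exponential_prob => ->.
by rewrite mulNr EFinM EFinB.
Qed.

(* The negative terms are moved across so that only nonnegative integrands
   occur. *)
Lemma le_integralD d (T : measurableType d) (nu : {measure set T -> \bar R})
    (D : set T) (f1 g1 f2 g2 : T -> R) : measurable D ->
  measurable_fun D f1 -> measurable_fun D g1 ->
  measurable_fun D f2 -> measurable_fun D g2 ->
  (forall x, D x -> [/\ 0 <= f1 x, 0 <= g1 x, 0 <= f2 x & 0 <= g2 x]) ->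
  (forall x, D x -> f1 x + g1 x <= f2 x + g2 x) ->
  (\int[nu]_(x in D) (f1 x)%:E + \int[nu]_(x in D) (g1 x)%:E <=
   \int[nu]_(x in D) (f2 x)%:E + \int[nu]_(x in D) (g2 x)%:E)%E.
Proof.
move=> mD mf1 mg1 mf2 mg2 fg0 fg.
have [f10 g10 f20 g20] : [/\ forall x, D x -> (0 <= (f1 x)%:E)%E,
    forall x, D x -> (0 <= (g1 x)%:E)%E, forall x, D x -> (0 <= (f2 x)%:E)%E &
    forall x, D x -> (0 <= (g2 x)%:E)%E].
  by split=> x /fg0[] *; rewrite lee_fin.
rewrite -!ge0_integralD //; try exact/measurable_EFinP.
apply: ge0_le_integral => //.
- by move=> x Dx; rewrite adde_ge0 ?f10 ?g10.
- by apply: emeasurable_funD; exact/measurable_EFinP.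
- by apply: emeasurable_funD; exact/measurable_EFinP.
Qed.

Lemma subcdf_indicator (b : bool) : subcdf (fun x => (b && (0 <= x))%:R).
Proof.
split=> [x y xy|y|y y0]; last by rewrite leNgt y0 andbF.
  by case: b => //=; case: (leP 0 x) => // x0; rewrite (le_trans x0 xy).
by case: (b && _); rewrite ?lexx ?ler01 ?ler0n.
Qed.

Lemma subcdf_convex (I : finType) (p : I -> R) (H : I -> R -> R) :
  (forall i, 0 <= p i) -> \sum_i p i = 1 -> (forall i, subcdf (H i)) ->
  subcdf (fun y => \sum_i p i * H i y).
Proof.
move=> p0 p1 sH; split.
- by move=> x y xy; apply: ler_sum => i _; have [Hh _ _] := sH i; rewrite ler_wpM2l ?Hh.
- move=> y; have H01 i : 0 <= H i y <= 1 by have [_ + _] := sH i; apply.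
  apply/andP; split.
    by apply: sumr_ge0 => i _; have /andP[h0 _] := H01 i; rewrite mulr_ge0.
  by rewrite -p1; apply: ler_sum => i _; have /andP[_ h1] := H01 i; rewrite ler_piMr.
- by move=> y y0; apply: big1 => i _; have [_ _ ->] := sH i; rewrite ?mulr0.
Qed.

Section Step.
Variables (a rh : R) (H : R -> R).
Hypotheses (a_gt0 : 0 < a) (rh_gt0 : 0 < rh) (H_subcdf : subcdf H).

Let measurable_integrand r :
  measurable_fun pos (fun t => a * expR (- (a * t)) * H (r - rh * t)).
Proof.
have [Hh _ _] := H_subcdf.
apply: measurable_funM; first exact: measurable_exp_density (ltW a_gt0).
exact: measurable_comp_budget (ltW rh_gt0).
Qed.

Let integrand_ge0 r t : 0 <= a * expR (- (a * t)) * H (r - rh * t).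
Proof.
have [_ H01 _] := H_subcdf; have /andP[H0 _] := H01 (r - rh * t).
by rewrite !mulr_ge0 ?expR_ge0 ?(ltW a_gt0).
Qed.

Lemma exp_step_ge0 r : (0 <= exp_step a rh H r)%E.
Proof. by apply: integral_ge0 => t _; rewrite lee_fin. Qed.

Lemma exp_step_neg r : r < 0 -> exp_step a rh H r = 0%E.
Proof.
have [_ _ Hn] := H_subcdf; move=> r0.
rewrite /exp_step (eq_integral (cst 0%E)) ?integral0 // => t; rewrite inE /= => t0.
by rewrite Hn ?mulr0 //; have := mulr_gt0 rh_gt0 t0; lra.
Qed.

(* The budget runs out after time [r / rh], and [H <= 1] before. *)
Lemma exp_step_le r : 0 <= r ->
  (exp_step a rh H r <= (1 - expR (- (a * (r / rh))))%:E)%E.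
Proof.
move=> r0; have [_ H01 Hn] := H_subcdf.
have := @integral_exp_density_upto 1 a (r / rh) ler01 a_gt0 (divr_ge0 r0 (ltW rh_gt0)).
rewrite mul1r => <-; apply: ge0_le_integral => //.
- exact: measurable_pos.
- by move=> t _; rewrite lee_fin.
- by apply/measurable_EFinP; exact: measurable_integrand.
- apply/measurable_EFinP; apply: measurable_funM; last exact: measurable_le_indicator.
  apply: measurable_funM; first exact: measurable_cst.
  exact: measurable_exp_density (ltW a_gt0).
move=> t /= t0; rewrite lee_fin mul1r; case: (leP t (r / rh)) => tT.
  have /andP[_ H1] := H01 (r - rh * t).
  by rewrite mulr1 ler_piMr // mulr_ge0 ?expR_ge0 ?(ltW a_gt0).
rewrite mulr0 Hn ?mulr0 //; move: tT; rewrite ltr_pdivrMr // => tT.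
by rewrite subr_lt0 mulrC.
Qed.

Lemma exp_step_fin r : exp_step a rh H r = (fine (exp_step a rh H r))%:E.
Proof.
have [r0|r0] := ltP r 0; first by rewrite exp_step_neg.
rewrite fineK // ge0_fin_numE ?exp_step_ge0 //.
by rewrite (le_lt_trans (exp_step_le r0)) ?ltry.
Qed.

Lemma exp_step_mono r1 r2 : r1 <= r2 -> (exp_step a rh H r1 <= exp_step a rh H r2)%E.
Proof.
have [Hh _ _] := H_subcdf; move=> r12.
apply: ge0_le_integral => //; first exact: measurable_pos.
- by move=> t _; rewrite lee_fin.
- by apply/measurable_EFinP; exact: measurable_integrand.
- by apply/measurable_EFinP; exact: measurable_integrand.
move=> t _; rewrite lee_fin ler_wpM2l ?mulr_ge0 ?expR_ge0 ?(ltW a_gt0) //.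
by apply: Hh; rewrite lerD2r.
Qed.

Lemma subcdf_exp_step : subcdf (fun r => fine (exp_step a rh H r)).
Proof.
split.
- by move=> x y xy; rewrite -lee_fin -!exp_step_fin exp_step_mono.
- move=> y; have [y0|y0] := ltP y 0; first by rewrite exp_step_neg //= lexx ler01.
  rewrite -!lee_fin -exp_step_fin exp_step_ge0 /=.
  by apply: le_trans (exp_step_le y0) _; rewrite lee_fin gerBl expR_ge0.
- by move=> y y0; rewrite exp_step_neg.
Qed.

End Step.

Lemma common_part_le (A B w z h h' : R) :
  0 <= w <= A -> w <= B -> 0 <= h <= 1 -> 0 <= h' -> h <= h' + 1 - z ->
  w * z + A * h <= A + B * h'.
Proof.
move=> /andP[w0 wA] wB /andP[h0 h1] h'0 hh'.
have : 0 <= (A - w) * (1 - h) by rewrite mulr_ge0 // subr_ge0.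
have : 0 <= (B - w) * h' by rewrite mulr_ge0 // subr_ge0.
have : 0 <= w * (h' + 1 - z - h) by rewrite mulr_ge0 // subr_ge0.
nra.
Qed.

Section CommonPart.
Variables (a b rh K eps r : R) (H H' : R -> R).
Hypotheses (a_gt0 : 0 < a) (b_gt0 : 0 < b) (rh_gt0 : 0 < rh).
Hypotheses (sH : subcdf H) (sH' : subcdf H') (r_ge0 : 0 <= r).
Hypotheses (K_lt : K * rh < Num.max a b)
  (gap : Num.max a b - K * rh <= (1 - eps) * Num.min a b).
Hypothesis HH' : forall y, 0 <= y -> H y <= H' y + 1 - (1 - eps) * expR (- (K * y)).

Local Notation m := (Num.min a b).
Local Notation M := (Num.max a b).
Local Notation T := (r / rh).
Local Notation al := (M - K * rh).
Local Notation be := ((1 - eps) * m / al).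
Local Notation kap := (be * expR (- (K * r))).

Let m_gt0 : 0 < m. Proof. by rewrite lt_min a_gt0 b_gt0. Qed.
Let al_gt0 : 0 < al. Proof. by rewrite subr_gt0. Qed.
Let be_ge1 : 1 <= be. Proof. by rewrite ler_pdivlMr // mul1r. Qed.
Let kap_ge0 : 0 <= kap.
Proof. by rewrite mulr_ge0 ?expR_ge0 // (le_trans ler01). Qed.

Let common_density_le c t : 0 <= t -> m <= c -> c <= M ->
  m * expR (- (M * t)) <= c * expR (- (c * t)).
Proof.
move=> t0 mc cM; rewrite ler_pM ?expR_ge0 ?(ltW m_gt0) //.
by rewrite ler_expR lerN2 ler_wpM2r.
Qed.

(* Up to the budget horizon [T], the two residence densities share the part
   [m * expR (- (M * t))], on which the hypothesis on [H] and [H'] applies. *)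
Let pointwise_le t : 0 < t ->
  kap * (al * expR (- (al * t))) * ((t <= T)%R)%:R
    + a * expR (- (a * t)) * H (r - rh * t)
  <= 1 * (a * expR (- (a * t))) * ((t <= T)%R)%:R
    + b * expR (- (b * t)) * H' (r - rh * t).
Proof.
have [_ H01 Hn] := sH; have [_ H01' Hn'] := sH'.
move=> t0; have [tT|tT] := leP t T; last first.
  have y0 : r - rh * t < 0 by move: tT; rewrite ltr_pdivrMr // subr_lt0 mulrC.
  by rewrite !mulr0 Hn // Hn' // !mulr0 addr0.
have y0 : 0 <= r - rh * t by move: tT; rewrite ler_pdivlMr // subr_ge0 mulrC.
have -> : kap * (al * expR (- (al * t))) =
    m * expR (- (M * t)) * ((1 - eps) * expR (- (K * (r - rh * t)))).
  have -> : kap * (al * expR (- (al * t))) =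
      (be * al) * (expR (- (K * r)) * expR (- (al * t))) by ring.
  have ee : expR (- (K * r)) * expR (- (al * t)) =
      expR (- (M * t)) * expR (- (K * (r - rh * t))).
    by rewrite -!expRD; congr expR; ring.
  by rewrite divfK ?gt_eqF // ee; ring.
have [ma mb] : m <= a /\ m <= b by rewrite !ge_min !lexx orbT.
have [aM bM] : a <= M /\ b <= M by rewrite !le_max !lexx orbT.
rewrite !mulr1 mul1r; apply: common_part_le; last exact: HH'.
- by rewrite mulr_ge0 ?expR_ge0 ?(ltW m_gt0) //= common_density_le // ltW.
- by rewrite common_density_le // ltW.
- exact: H01.
- by have /andP[] := H01' (r - rh * t).
Qed.

Let integral_le : ((kap * (1 - expR (- (al * T))))%:E + exp_step a rh H r <=
                   (1 * (1 - expR (- (a * T))))%:E + exp_step b rh H' r)%E.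
Proof.
have [Hh H01 _] := sH; have [Hh' H01' _] := sH'.
have T0 : 0 <= T by rewrite divr_ge0 // ltW.
have mcut c al' : 0 <= al' ->
    measurable_fun pos (fun t => c * (al' * expR (- (al' * t))) * ((t <= T)%R)%:R).
  move=> al'0; apply: measurable_funM; last exact: measurable_le_indicator.
  by apply: measurable_funM; [exact: measurable_cst|exact: measurable_exp_density].
have mres c (G : R -> R) : 0 <= c -> {homo G : x y / x <= y} ->
    measurable_fun pos (fun t => c * expR (- (c * t)) * G (r - rh * t)).
  move=> c0 Gh; apply: measurable_funM; first exact: measurable_exp_density.
  exact: measurable_comp_budget (ltW rh_gt0).
rewrite -!integral_exp_density_upto // /exp_step.
apply: le_integralD => //; first exact: measurable_pos.
- exact: mcut (ltW al_gt0).
- exact: mres (ltW a_gt0) Hh.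
- exact: mcut (ltW a_gt0).
- exact: mres (ltW b_gt0) Hh'.
move=> t t0; have /andP[h0 _] := H01 (r - rh * t).
have /andP[h0' _] := H01' (r - rh * t).
have e0 c : 0 < c -> 0 <= c * expR (- (c * t)).
  by move=> c0; rewrite mulr_ge0 ?expR_ge0 // ltW.
split; first exact: mulr_ge0 (mulr_ge0 kap_ge0 (e0 _ al_gt0)) (ler0n _ _).
- exact: mulr_ge0 (e0 _ a_gt0) h0.
- by rewrite mul1r; exact: mulr_ge0 (e0 _ a_gt0) (ler0n _ _).
- exact: mulr_ge0 (e0 _ b_gt0) h0'.
Qed.

Lemma exp_step_sub_le_of_gap :
  fine (exp_step a rh H r) - fine (exp_step b rh H' r) <= 1 - expR (- (K * r)).
Proof.
have := integral_le; rewrite (exp_step_fin a_gt0 rh_gt0 sH).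
rewrite (exp_step_fin b_gt0 rh_gt0 sH') -!EFinD lee_fin mul1r.
have rT : rh * T = r by rewrite mulrC divfK ?gt_eqF.
have eMK : expR (- (M * T)) <= expR (- (K * r)).
  by rewrite ler_expR lerN2 -{1}rT mulrA ler_wpM2r ?divr_ge0 // ltW.
have eMa : expR (- (M * T)) <= expR (- (a * T)).
  by rewrite ler_expR lerN2 ler_wpM2r ?divr_ge0 ?le_max ?lexx // ltW.
have -> : kap * (1 - expR (- (al * T))) = be * (expR (- (K * r)) - expR (- (M * T))).
  have KrT : K * r + al * T = M * T by rewrite -{1}rT; ring.
  by rewrite -KrT opprD expRD; ring.
have : expR (- (K * r)) - expR (- (M * T)) <= be * (expR (- (K * r)) - expR (- (M * T))).
  by rewrite ler_peMl // subr_ge0.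
lra.
Qed.

End CommonPart.

End ExpStep.

Section DecayRate.
Variable R : realType.

Definition decay_rate (q del eps : R) : R := q * (expR del * (eps + 1) - 1).

Lemma decay_rate_ge0 (q del eps : R) : 0 <= q -> 0 <= del -> 0 <= eps ->
  0 <= decay_rate q del eps.
Proof.
move=> q0 del0 eps0; have e1 : 1 <= expR del by rewrite -expR0 ler_expR.
by rewrite mulr_ge0 // subr_ge0; nra.
Qed.

Lemma max_le_min_expR (a b del : R) : 0 < a -> 0 < b -> `|ln a - ln b| <= del ->
  Num.max a b <= Num.min a b * expR del.
Proof.
have le_mulexp x y : 0 < x -> 0 < y -> ln y - ln x <= del -> y <= x * expR del.
  move=> x0 y0 dxy; rewrite -[y]lnK ?posrE // -[x in x * _]lnK ?posrE //.
  by rewrite -expRD ler_expR; lra.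
move=> a0 b0; rewrite ler_norml => /andP[dba dab].
by have [_|_] := leP a b; apply: le_mulexp => //; lra.
Qed.

(* [decay_rate] is chosen to make this hold: with e = expR del it reduces to
   (e - 1)^2 + eps (e^2 - 1) >= 0. *)
Lemma decay_gap_le (m M rh q del eps : R) : 0 <= eps -> 0 <= del ->
  0 < m -> m <= M -> M <= m * expR del -> M <= q * rh -> decay_rate q del eps * rh < M ->
  M - decay_rate q del eps * rh <= (1 - eps) * m.
Proof.
rewrite /decay_rate; set e := expR del; set X := e * (eps + 1) - 1.
move=> eps0 del0 m0 mM Mme Mqr KM.
have e1 : 1 <= e by rewrite /e -expR0 ler_expR.
have X0 : 0 <= X by rewrite /X subr_ge0; nra.
have MX : M * X <= q * X * rh by rewrite mulrAC ler_wpM2r.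
have X1 : X < 1 by have := lt_le_trans m0 mM; nra.
have eXe : e * (2 - e * (eps + 1)) <= 1 - eps.
  have : 0 <= (e - 1) ^+ 2 by exact: sqr_ge0.
  have : 0 <= eps * (e * e - 1) by rewrite mulr_ge0 //; nra.
  nra.
have MXm : M * (2 - e * (eps + 1)) <= m * e * (2 - e * (eps + 1)).
  by apply: ler_wpM2r => //; move: X1; rewrite /X; nra.
have : m * (e * (2 - e * (eps + 1))) <= m * (1 - eps) by rewrite ler_wpM2l // ltW.
move: MX MXm; rewrite /X; lra.
Qed.

Lemma exp_step_sub_le (a b rh q del eps r : R) (H H' : R -> R) :
  0 < a -> 0 < b -> 0 < rh -> subcdf H -> subcdf H' -> 0 <= r ->
  0 <= eps -> 0 <= del -> `|ln a - ln b| <= del -> a / rh <= q -> b / rh <= q ->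
  (forall y, 0 <= y ->
     H y <= H' y + 1 - (1 - eps) * expR (- (decay_rate q del eps * y))) ->
  fine (exp_step a rh H r) - fine (exp_step b rh H' r) <=
    1 - expR (- (decay_rate q del eps * r)).
Proof.
move=> a0 b0 rh0 sH sH' r0 eps0 del0 dab aq bq HH'.
set K := decay_rate q del eps.
have aM : a <= Num.max a b by rewrite le_max lexx.
have [Ka|aK] := leP a (K * rh).
  have := exp_step_le a0 rh0 sH r0; have := exp_step_ge0 rh b0 sH' r.
  rewrite (exp_step_fin a0 rh0 sH) (exp_step_fin b0 rh0 sH') !lee_fin.
  have : expR (- (K * r)) <= expR (- (a * (r / rh))).
    by rewrite ler_expR lerN2 mulrCA [K * r]mulrC ler_wpM2l // ler_pdivrMr.
  lra.
apply: exp_step_sub_le_of_gap => //; [exact: lt_le_trans aM| |exact: HH'].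
apply: decay_gap_le => //; first by rewrite lt_min a0 b0.
- by rewrite ge_min aM.
- exact: max_le_min_expR.
- by rewrite ge_max -!ler_pdivrMr // aq bq.
- exact: lt_le_trans aM.
Qed.

End DecayRate.

Section Supremum.
Variable R : realType.
Local Open Scope classical_set_scope.

Lemma fine_ereal_sup_range (u : nat -> R) : has_ubound (range u) ->
  fine (ereal_sup (range (fun n => (u n)%:E))) = sup (range u).
Proof.
move=> ub; rewrite -(image_comp u EFin) ereal_sup_EFin //.
by exists (u 0%N), 0%N.
Qed.

Lemma sup_range_sub_le (u v : nat -> R) (c : R) :
  has_ubound (range v) -> (forall n, u n - v n <= c) ->
  sup (range u) - sup (range v) <= c.
Proof.
move=> ubv uvc; rewrite lerBlDl; apply: ge_sup; first by exists (u 0%N), 0%N.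
move=> _ [n _ <-]; have : v n <= sup (range v) by apply: ub_le_sup => //; exists n.
by have := uvc n; lra.
Qed.

End Supremum.

Section Reachability.
Variables (R : realType) (S : finType) (A : eqType) (P : S -> S -> R)
  (E : S -> R) (L : S -> A) (rho : S -> R) (g : S).
Hypotheses (HP : is_distr_fun P) (HE : forall p, 0 < E p) (Hrho : forall p, 0 < rho p).

Local Notation rw := (reach_within P E rho g).

Definition reach_prob n u x := fine (rw n u x).

Definition next_reach_prob n u y := \sum_w P u w * reach_prob n w y.

Lemma reach_within_succ n u x : (forall w y, rw n w y = (reach_prob n w y)%:E) ->
  rw n.+1 u x = if (u == g) && (0 <= x) then 1%E
                else exp_step (E u) (rho u) (next_reach_prob n u) x.
Proof.
move=> rwE /=; case: ifP => // _; apply: eq_integral => t _.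
under eq_bigr do rewrite rwE -EFinM.
by rewrite sumEFin -EFinM.
Qed.

Lemma reach_within_prob n :
  (forall u x, rw n u x = (reach_prob n u x)%:E) /\ forall u, subcdf (reach_prob n u).
Proof.
elim: n => [|n [rwE sv]]; first by split=> // u; exact: subcdf_indicator.
have [P0 P1] := HP.
have sn u : subcdf (next_reach_prob n u) by apply: subcdf_convex.
pose step u x := fine (exp_step (E u) (rho u) (next_reach_prob n u) x).
have reach_probE u x :
    reach_prob n.+1 u x = if (u == g) && (0 <= x) then 1 else step u x.
  by rewrite /reach_prob reach_within_succ //; case: ifP.
split=> [u x|u].
  by rewrite reach_probE reach_within_succ //; case: ifP => // _; exact: exp_step_fin.
case: (u =P g) => [ug|/eqP/negbTE ug].
  have -> : reach_prob n.+1 u = fun x => (true && (0 <= x))%:R.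
    apply: boolp.funext => x; rewrite reach_probE ug eqxx /=.
    by case: leP => // x0; rewrite /step exp_step_neg.
  exact: subcdf_indicator.
have -> : reach_prob n.+1 u = step u.
  by apply: boolp.funext => x; rewrite reach_probE ug.
exact: subcdf_exp_step.
Qed.

Lemma subcdf_next_reach_prob n u : subcdf (next_reach_prob n u).
Proof.
have [P0 P1] := HP; apply: subcdf_convex => // w.
by case: (reach_within_prob n) => _.
Qed.

Variables (Rl : rel S) (eps del q : R).
Hypotheses (Hbis : eps_delta_bisim P E L rho eps del Rl)
  (Hg_lab : forall p, L p = L g -> p = g)
  (eps_ge0 : 0 <= eps) (del_ge0 : 0 <= del) (Hq : forall p, E p / rho p <= q).

Local Notation K := (decay_rate q del eps).

Lemma bisim_eq_goal s s' : Rl s s' -> (s == g) = (s' == g).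
Proof.
have [_ [_ Hb]] := Hbis; move=> /Hb[Ls _ _ _].
by apply/eqP/eqP => [sg|s'g]; apply: Hg_lab; rewrite -?sg -?s'g ?Ls.
Qed.

Lemma reach_prob_sub_le n s s' x : Rl s s' -> 0 <= x ->
  reach_prob n s x - reach_prob n s' x <= 1 - expR (- (K * x)).
Proof.
have K0 : 0 <= K.
  by apply: decay_rate_ge0 => //; apply: le_trans (Hq g); rewrite divr_ge0 ?ltW.
have Kb y : 0 <= y -> 0 <= 1 - expR (- (K * y)).
  by move=> y0; rewrite subr_ge0 expR_le1 oppr_le0 mulr_ge0.
elim: n s s' x => [|n IH] s s' x Rss' x0.
  by rewrite /reach_prob /= (bisim_eq_goal Rss') subrr Kb.
have [rwE sv] := reach_within_prob n; have [P0 P1] := HP.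
rewrite /reach_prob !reach_within_succ // (bisim_eq_goal Rss').
case: ifP => _; first by rewrite subrr Kb.
have [_ [_ /(_ s s' Rss') [_ rhoE lnE PB]]] := Hbis.
rewrite -rhoE; apply: exp_step_sub_le; rewrite ?HE ?Hrho ?Hq ?rhoE ?Hq //;
  try exact: subcdf_next_reach_prob.
move=> y y0; have v01 w : 0 <= reach_prob n w y <= 1 by have [_ + _] := sv w; apply.
have := coupling_sub_le P0 eps_ge0 PB (P1 s) v01 (c := 1 - expR (- (K * y)))
  (ltac:(by rewrite gerBl expR_ge0)) (fun v u Rvu => IH v u y Rvu y0).
by rewrite /next_reach_prob; lra.
Qed.

Lemma Pr_reach_sub_le s s' r : Rl s s' -> 0 <= r ->
  `|Pr_reach P E rho g s r - Pr_reach P E rho g s' r| <= 1 - expR (- (K * r)).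
Proof.
move=> Rss' r0; have [_ [Rsym _]] := Hbis.
have ub u : has_ubound (range (fun n => reach_prob n u r)).
  exists 1 => _ [n _ <-]; have [_ v01 _] := (reach_within_prob n).2 u.
  by have /andP[] := v01 r.
have PrE u : Pr_reach P E rho g u r = sup (range (fun n => reach_prob n u r)).
  rewrite /Pr_reach -(fine_ereal_sup_range (ub u)).
  have -> // : (fun n => rw n u r) = (fun n => (reach_prob n u r)%:E).
  by apply: boolp.funext => n; rewrite (reach_within_prob n).1.
rewrite !PrE ler_norml; apply/andP; split.
  rewrite lerNl opprB; apply: sup_range_sub_le => // n.
  by apply: reach_prob_sub_le; first exact: Rsym.
by apply: sup_range_sub_le => // n; apply: reach_prob_sub_le.
Qed.

End Reachability.

Theorem proposition9 (R : realType) (S : finType) (A : eqType)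
    (P : S -> S -> R) (E : S -> R) (s_init : S) (L : S -> A)
    (rho : S -> R) (g : S)
    (HP : is_distr_fun P)
    (HE : forall p, 0 < E p)
    (Hrho : forall p, 0 < rho p)
    (Hg_abs : P g g = 1)
    (Hg_lab : forall p, L p = L g -> p = g)
    (eps delta : R) (Heps : 0 <= eps) (Hdelta : 0 <= delta)
    (s s' : S) (Hbis : eps_delta_bisimilar P E L rho eps delta s s')
    (r : R) (Hr : 0 <= r)
    (qhat : R) (Hqhat : forall p, E p / rho p <= qhat) :
  `| Pr_reach P E rho g s r - Pr_reach P E rho g s' r |
    <= 1 - expR (- (qhat * r * (expR delta * (eps + 1) - 1))).
Proof.
have [Rl [Hb Rss']] := Hbis.
rewrite mulrAC; exact: (Pr_reach_sub_le HP HE Hrho Hb Hg_lab Heps Hdelta Hqhat Rss' Hr).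
Qed.
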